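(* Let $f:[-1,1]\to[0,1]$ be non-increasing with $f(0)=\tfrac12$ and continuous at $0$, and let $\delta\in(0,\tfrac12]$. Consider the sequential design (truncated Wei's adaptive coin design) with $p_1=\tfrac12$ and, for $i\ge2$, $$p_i=\min\{\max\{f(R_{i-1}),\delta\},1-\delta\},\qquad R_{i-1}=\frac{D_{i-1}}{i-1},$$ where $D_k=m_k-n_k$, with $m_k$ and $n_k$ the numbers of units among the first $k$ assigned to treatment and control respectively, and $K_i\mid\mathcal F_{i-1}\sim\mathrm{Bernoulli}(p_i)$. Then $p_i\xrightarrow{p}\tfrac12$ as $i\to\infty$; i.e. the design is strongly stable with $p^\star=\tfrac12$.
   Context: $K_i\in\{0,1\}$ is the treatment indicator of unit $i$ and $\mathcal F_{i-1}=\sigma(K_1,\dots,K_{i-1})$ (together with the observed outcomes up to unit $i-1$). A sequential design $(p_i)$ is strongly stable if there is a non-random $p^\star\in(0,1)$ with $p_i\xrightarrow{p}p^\star$. *)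

From HB Require Import structures.
From mathcomp Require Import all_boot all_order all_algebra.
From mathcomp Require Import all_classical all_reals all_analysis.
Set Implicit Arguments. Unset Strict Implicit. Unset Printing Implicit Defensive.
Import Order.TTheory GRing.Theory Num.Theory.
Import numFieldNormedType.Exports.
Local Open Scope classical_set_scope.
Local Open Scope ring_scope.

(* Units are indexed 1, 2, 3, ...; index 0 is unused.
   K i x = true means unit i is assigned to treatment. *)

Definition Dimb {R : realType} {T : Type} (K : nat -> T -> bool) (k : nat) (x : T) : R :=
  \sum_(1 <= j < k.+1) (if K j x then 1 else -1).

Definition wei_p {R : realType} {T : Type} (f : R -> R) (delta : R)
    (K : nat -> T -> bool) (i : nat) (x : T) : R :=
  if (i <= 1)%N then 1 / 2
  else Num.min (Num.max (f (Dimb K i.-1 x / (i.-1)%:R)) delta) (1 - delta).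

Definition cvg_in_prob {R : realType} {d} {T : measurableType d}
    (P : probability T R) (X : nat -> T -> R) (c : R) : Prop :=
  forall eps : R, 0 < eps ->
    (fun n => P [set x | eps < `|X n x - c|]) @ \oo --> 0%E.

From HB Require Import structures.
From mathcomp Require Import all_boot all_order all_algebra.
From mathcomp Require Import all_classical all_reals all_analysis.
From mathcomp Require Import measurable_realfun lra ring.
Set Implicit Arguments. Unset Strict Implicit. Unset Printing Implicit Defensive.
Import Order.TTheory GRing.Theory Num.Theory.
Import numFieldNormedType.Exports.
Local Open Scope classical_set_scope.
Local Open Scope ring_scope.

(* The clamped design pushes the walk [D_k] back towards 0: [D_k (2 p_(k+1) - 1) <= 0]
   because [f] is non-increasing with [f 0 = 1/2].  Since [E[K_(k+1) | F_k] = p_(k+1)],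
   the increment [xi_(k+1) = D_(k+1) - D_k] satisfies [E[D_k xi_(k+1)] = E[D_k (2 p_(k+1) - 1)] <= 0],
   hence [E[D_(k+1)^2] <= E[D_k^2] + 1] and [E[D_n^2] <= n].  By Chebyshev
   [P(|D_n / n| >= eta) <= 1 / (eta^2 n)], and continuity of [f] at 0 turns
   [D_n / n -> 0] in probability into [p_(n+1) -> 1/2] in probability. *)

Section sigma_algebra_closure.
Variables (T : pointedType) (G : set (set T)).
Hypothesis sG : sigma_algebra setT G.

(* [<<s G >> = G], and [<<s G >>] is the measurable sets of [g_sigma_algebraType G]. *)
Lemma sigma_algebra_setT : G setT.
Proof. by rewrite -(sigma_algebra_id sG); exact: (@measurableT _ (g_sigma_algebraType G)). Qed.

Lemma sigma_algebra_setC A : G A -> G (~` A).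
Proof. by rewrite -(sigma_algebra_id sG); exact: (@measurableC _ (g_sigma_algebraType G)). Qed.

Lemma sigma_algebra_setI A B : G A -> G B -> G (A `&` B).
Proof. by rewrite -(sigma_algebra_id sG); exact: (@measurableI _ (g_sigma_algebraType G)). Qed.

Lemma sigma_algebra_setU A B : G A -> G B -> G (A `|` B).
Proof. by rewrite -(sigma_algebra_id sG); exact: (@measurableU _ (g_sigma_algebraType G)). Qed.

End sigma_algebra_closure.

Lemma filtration_le {T : Type} (F : nat -> set (set T)) :
  (forall n, F n `<=` F n.+1) -> forall j k, (j <= k)%N -> F j `<=` F k.
Proof.
move=> FS j k /subnK <-; elim: (k - j)%N => [|m IH] //= A FA.
by rewrite addSn; apply/FS/IH.
Qed.

Section clamp.
Variable R : realDomainType.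
Implicit Types lo hi a c : R.

Definition clamp lo hi a := Num.min (Num.max a lo) hi.

Lemma clamp_ge lo hi a : lo <= hi -> lo <= clamp lo hi a.
Proof. by move=> lohi; rewrite /clamp le_min lohi le_max lexx orbT. Qed.

Lemma clamp_le lo hi a : clamp lo hi a <= hi.
Proof. by rewrite /clamp ge_min lexx orbT. Qed.

Lemma clamp_le_of lo hi a c : lo <= c -> a <= c -> clamp lo hi a <= c.
Proof. by move=> loc ac; rewrite /clamp ge_min ge_max ac loc. Qed.

Lemma clamp_ge_of lo hi a c : c <= hi -> c <= a -> c <= clamp lo hi a.
Proof. by move=> chi ca; rewrite /clamp le_min le_max ca chi. Qed.

Lemma dist_clamp_le lo hi a c : lo <= c <= hi -> `|clamp lo hi a - c| <= `|a - c|.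
Proof.
case/andP=> loc chi; have [ac|ca] := lerP a c.
- have clamp_le_c := clamp_le_of hi loc ac.
  have a_le_clamp : a <= clamp lo hi a.
    by rewrite /clamp le_min le_max lexx (le_trans ac chi).
  by rewrite !ler0_norm ?subr_le0 //; lra.
- have c_le_clamp := clamp_ge_of lo chi (ltW ca).
  have clamp_le_a : clamp lo hi a <= a.
    by rewrite /clamp ge_min ge_max lexx (le_trans loc (ltW ca)).
  by rewrite !ger0_norm ?subr_ge0 ?(ltW ca) //; lra.
Qed.

End clamp.

Section walk.
Variables (R : realType) (T : Type) (K : nat -> T -> bool).

Lemma Dimb0 x : Dimb (R:=R) K 0 x = 0.
Proof. by rewrite /Dimb big_geq. Qed.

Lemma DimbS k x : Dimb (R:=R) K k.+1 x = Dimb K k x + (if K k.+1 x then 1 else -1).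
Proof. by rewrite /Dimb big_nat_recr. Qed.

Lemma normr_Dimb_le k x : `|Dimb (R:=R) K k x| <= k%:R.
Proof.
elim: k => [|k IH]; first by rewrite Dimb0 normr0.
rewrite DimbS (le_trans (ler_normD _ _))// -natr1 lerD //.
by case: (K _ x); rewrite ?normrN normr1.
Qed.

Variables (f : R -> R) (delta : R).

Lemma wei_pE i x : (1 < i)%N ->
  wei_p f delta K i x = clamp delta (1 - delta) (f (Dimb K i.-1 x / i.-1%:R)).
Proof. by move=> i_gt1; rewrite /wei_p leqNgt i_gt1. Qed.

Hypothesis delta_ge0 : 0 <= delta.
Hypothesis delta_le_half : delta <= 1 / 2.

Lemma wei_p_ge0 i x : 0 <= wei_p f delta K i x.
Proof.
rewrite /wei_p; case: ifP => _; first by lra.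
by apply: le_trans delta_ge0 (clamp_ge _ _); move: delta_le_half; lra.
Qed.

Lemma wei_p_le1 i x : wei_p f delta K i x <= 1.
Proof.
rewrite /wei_p; case: ifP => _; first by lra.
by rewrite (le_trans (clamp_le _ _ _))// lerBlDl lerDr.
Qed.

Lemma dist_wei_p_half_le n x : (0 < n)%N ->
  `|wei_p f delta K n.+1 x - 1 / 2| <= `|f (Dimb K n x / n%:R) - 1 / 2|.
Proof.
move=> n0; rewrite wei_pE ?ltnS //= dist_clamp_le //.
by apply/andP; split; move: delta_le_half; lra.
Qed.

Hypothesis f_nincr : forall r s, -1 <= r <= 1 -> -1 <= s <= 1 -> r <= s -> f s <= f r.
Hypothesis f0 : f 0 = 1 / 2.

Lemma Dimb_wei_p_drift_le0 k x :
  Dimb K k x * (2 * wei_p f delta K k.+1 x - 1) <= 0.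
Proof.
case: k => [|k]; first by rewrite Dimb0 mul0r.
rewrite wei_pE //=; set D := Dimb K k.+1 x; set r := D / k.+1%:R.
have r_bnd : -1 <= r <= 1.
  by rewrite -ler_norml normrM normfV normr_nat ler_pdivrMr ?ltr0n // mul1r normr_Dimb_le.
have zero_bnd : -1 <= (0 : R) <= 1 by apply/andP; split; lra.
have [D_ge0|D_lt0] := lerP 0 D.
- have fr : f r <= 1 / 2 by rewrite -f0 f_nincr // divr_ge0.
  have p_le_half := clamp_le_of (1 - delta) delta_le_half fr.
  by apply: mulr_ge0_le0 => //; lra.
- have fr : 1 / 2 <= f r.
    by rewrite -f0 f_nincr // pmulr_lle0 ?invr_gt0 ?ltr0n // ltW.
  have half_le : 1 / 2 <= 1 - delta by move: delta_le_half; lra.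
  have half_le_p := clamp_ge_of delta half_le fr.
  by apply: mulr_le0_ge0; [exact: ltW | lra].
Qed.

End walk.

Lemma Dimb_preimage_adapted (R : realType) (T : pointedType) (F : nat -> set (set T))
    (K : nat -> T -> bool) :
  (forall n, sigma_algebra setT (F n)) -> (forall n, F n `<=` F n.+1) ->
  (forall i, (0 < i)%N -> F i [set x | K i x]) ->
  forall k (S : set R), F k (Dimb K k @^-1` S).
Proof.
move=> sF FS FK; elim=> [|k IH] S.
  have [S0|S0] := pselect (S 0).
    suff -> : Dimb K 0 @^-1` S = setT by exact: sigma_algebra_setT.
    by apply/seteqP; split=> x //= _; rewrite Dimb0.
  suff -> : Dimb K 0 @^-1` S = set0 by case: (sF 0%N).
  by apply/seteqP; split=> x //=; rewrite Dimb0.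
have -> : Dimb K k.+1 @^-1` S =
   (Dimb K k @^-1` [set y | S (y + 1)] `&` [set x | K k.+1 x]) `|`
   (Dimb K k @^-1` [set y | S (y - 1)] `&` ~` [set x | K k.+1 x]).
  apply/seteqP; split=> x /=; rewrite DimbS.
  - by case: (K _ x) => Sx; [left|right].
  - by case: (K _ x) => -[] [] //= ? ?; rewrite ?subrK ?addrK.
have FK1 := FK k.+1 isT.
by apply: (sigma_algebra_setU (sF _)); apply: (sigma_algebra_setI (sF _));
  [apply/FS/IH | exact: FK1 | apply/FS/IH | exact: (sigma_algebra_setC (sF _))].
Qed.

Section bounded_measurable.
Context d (T : measurableType d) (R : realType) (P : probability T R).
Implicit Types (A : set T) (g h : T -> R).

Definition bounded_measurable g :=
  measurable_fun setT g /\ exists M, forall x, `|g x| <= M.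

Lemma bounded_measurable_integrable A g : measurable A ->
  bounded_measurable g -> P.-integrable A (EFin \o g).
Proof.
move=> mA [mg [M gM]]; apply: measurable_bounded_integrable => //.
- by rewrite (le_lt_trans (probability_le1 P mA)) ?ltry.
- exact: measurable_funS mg.
- exists M; split=> [|N MN x _]; first exact: num_real.
  by rewrite /= (le_trans (gM x)) ?ltW.
Qed.

Lemma bounded_measurable_cst c : bounded_measurable (fun=> c).
Proof. by split; [exact: measurable_cst | exists `|c|]. Qed.

Lemma bounded_measurable_indic A : measurable A -> bounded_measurable (fun x => \1_A x).
Proof.
move=> mA; split; first exact: measurable_indic.
by exists 1 => x; rewrite indicE; case: (_ \in _); rewrite ?normr0 ?normr1.
Qed.

Lemma bounded_measurableD g h : bounded_measurable g -> bounded_measurable h ->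
  bounded_measurable (fun x => g x + h x).
Proof.
move=> [mg [M1 gM1]] [mh [M2 hM2]]; split; first exact: measurable_funD.
by exists (M1 + M2) => x; rewrite (le_trans (ler_normD _ _)) ?lerD.
Qed.

Lemma bounded_measurableM g h : bounded_measurable g -> bounded_measurable h ->
  bounded_measurable (fun x => g x * h x).
Proof.
move=> [mg [M1 gM1]] [mh [M2 hM2]]; split; first exact: measurable_funM.
by exists (M1 * M2) => x; rewrite normrM ler_pM.
Qed.

Lemma bounded_measurableX g n : bounded_measurable g ->
  bounded_measurable (fun x => g x ^+ n).
Proof.
move=> [mg [M gM]]; split; first exact: measurable_funX.
by exists (M ^+ n) => x; rewrite normrX lerXn2r // nnegrE (le_trans _ (gM x)).
Qed.

Lemma Rintegral_indicM A g : measurable A ->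
  Rintegral P setT (fun x => \1_A x * g x) = Rintegral P A g.
Proof.
move=> mA; rewrite -[in RHS](setTI A) Rintegral_mkcondr; apply: eq_Rintegral => x _.
by rewrite patchE indicE; case: (x \in A); rewrite ?mul1r ?mul0r.
Qed.

End bounded_measurable.

Section wei_design.
Context d (T : measurableType d) (R : realType) (P : probability T R).
Variables (f : R -> R) (delta : R) (F : nat -> set (set T)) (K : nat -> T -> bool).
Hypothesis F_sigma : forall n, sigma_algebra setT (F n).
Hypothesis F_measurable : forall n, F n `<=` measurable.
Hypothesis F_incr : forall n, F n `<=` F n.+1.
Hypothesis K_adapted : forall i, (0 < i)%N -> F i [set x | K i x].
Hypothesis K_cond : forall i, (0 < i)%N -> forall A, F i.-1 A ->
  P (A `&` [set x | K i x]) = (\int[P]_(x in A) (wei_p f delta K i x)%:E)%E.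

Hypothesis delta_ge0 : 0 <= delta.
Hypothesis delta_le_half : delta <= 1 / 2.

Hypothesis f_nincr :
  forall r s, -1 <= r <= 1 -> -1 <= s <= 1 -> r <= s -> f s <= f r.
Hypothesis f0 : f 0 = 1 / 2.

Let D k : T -> R := Dimb K k.
Let xi j x : R := if K j x then 1 else -1.
Let p i : T -> R := wei_p f delta K i.

Lemma measurable_Dimb_preimage k (S : set R) : measurable (D k @^-1` S).
Proof. exact: F_measurable (Dimb_preimage_adapted F_sigma F_incr K_adapted k S). Qed.

Lemma measurable_wei_p_preimage i (S : set R) : measurable (p i @^-1` S).
Proof.
exact: (measurable_Dimb_preimage i.-1 ((fun r => if (i <= 1)%N then 1 / 2
  else clamp delta (1 - delta) (f (r / i.-1%:R))) @^-1` S)).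
Qed.

Lemma measurable_K j : (0 < j)%N -> measurable [set x | K j x].
Proof. by move=> j0; exact: F_measurable (K_adapted j0). Qed.

Lemma xiE j x : xi j x = 2 * \1_[set x | K j x] x - 1.
Proof.
rewrite /xi indicE; case: ifP => Kjx; first by rewrite mem_set //=; lra.
by rewrite memNset /= ?Kjx //; lra.
Qed.

Lemma bounded_measurable_Dimb k : bounded_measurable (D k).
Proof.
split; last by exists k%:R; exact: normr_Dimb_le.
by move=> _ Y _; rewrite setTI; exact: measurable_Dimb_preimage.
Qed.

Lemma bounded_measurable_xi j : (0 < j)%N -> bounded_measurable (xi j).
Proof.
move=> j0; split; last by exists 1 => x; rewrite /xi; case: (K j x); rewrite ?normrN normr1.
rewrite (_ : xi j = fun x => 2 * \1_[set x | K j x] x - 1); last exact/funext/xiE.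
apply: measurable_funB; last exact: measurable_cst.
by apply: measurable_funM; [exact: measurable_cst | exact/measurable_indic/measurable_K].
Qed.

Lemma bounded_measurable_wei_p i : bounded_measurable (p i).
Proof.
split; last by exists 1 => x; rewrite ger0_norm ?wei_p_ge0 ?wei_p_le1.
by move=> _ Y _; rewrite setTI; exact: measurable_wei_p_preimage.
Qed.

Local Hint Resolve bounded_measurable_cst bounded_measurable_indic bounded_measurableD
  bounded_measurableM bounded_measurableX bounded_measurable_Dimb bounded_measurable_xi
  bounded_measurable_wei_p measurable_K measurableT : core.
Local Hint Extern 2 => apply: bounded_measurable_integrable : core.

(* [E[xi_k | F_(k-1)] = 2 p_k - 1], in integrated form. *)
Lemma Rintegral_xi_past k A : (0 < k)%N -> F k.-1 A ->
  Rintegral P A (xi k) = Rintegral P A (fun x => 2 * p k x - 1).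
Proof.
move=> k0 FA; have mA := F_measurable FA.
rewrite (eq_Rintegral _ (fun x _ => xiE k x)).
rewrite !RintegralB ?RintegralZl; auto.
congr (2 * _ - _).
rewrite /Rintegral integral_indic //; last exact: measurable_K.
by rewrite -(K_cond k0 FA) setIC.
Qed.

Lemma Rintegral_xiM j g : (0 < j)%N -> bounded_measurable g ->
  Rintegral P setT (fun x => xi j x * g x) =
  2 * Rintegral P [set x | K j x] g - Rintegral P setT g.
Proof.
move=> j0 gb.
under eq_Rintegral do rewrite xiE mulrBl mul1r -mulrA.
rewrite RintegralB ?RintegralZl ?Rintegral_indicM; auto 6.
Qed.

(* [xi_j] is an affine function of the indicator of an event of [F_(k-1)]. *)
Lemma Rintegral_xiMxi j k : (0 < j)%N -> (j < k)%N ->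
  Rintegral P setT (fun x => xi j x * xi k x) =
  Rintegral P setT (fun x => xi j x * (2 * p k x - 1)).
Proof.
move=> j0 jk; have k0 : (0 < k)%N by apply: leq_trans jk.
rewrite !Rintegral_xiM ?Rintegral_xi_past //; auto.
- exact: sigma_algebra_setT.
- by apply: (filtration_le F_incr _ (K_adapted j0)); rewrite -ltnS prednK.
Qed.

Lemma Rintegral_DimbMxi m k : (m < k)%N ->
  Rintegral P setT (fun x => D m x * xi k x) =
  Rintegral P setT (fun x => D m x * (2 * p k x - 1)).
Proof.
elim: m => [|m IH] mk.
  by under eq_Rintegral do rewrite /D Dimb0 mul0r;
    under [RHS]eq_Rintegral do rewrite /D Dimb0 mul0r.
have k0 : (0 < k)%N by apply: leq_trans mk.
have DS g : bounded_measurable g -> Rintegral P setT (fun x => D m.+1 x * g x) =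
    Rintegral P setT (fun x => D m x * g x) + Rintegral P setT (fun x => xi m.+1 x * g x).
  move=> gb; rewrite -RintegralD; auto.
  by apply: eq_Rintegral => x _; rewrite /D DimbS mulrDl.
rewrite !DS ?IH ?Rintegral_xiMxi ?(ltnW mk) //; auto.
Qed.

Lemma Rintegral_Dimb_sqrS k :
  Rintegral P setT (fun x => D k.+1 x ^+ 2) <= Rintegral P setT (fun x => D k x ^+ 2) + 1.
Proof.
have drift : Rintegral P setT (fun x => D k x * (2 * p k.+1 x - 1)) <= 0.
  rewrite -(mul0r (fine (P setT))) -Rintegral_cst //.
  apply: le_Rintegral => //; try by auto 6.
  by move=> x _; exact: Dimb_wei_p_drift_le0 delta_le_half f_nincr f0 _ _.
have -> : Rintegral P setT (fun x => D k.+1 x ^+ 2) =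
    Rintegral P setT (fun x => D k x * D k x + 2 * (D k x * xi k.+1 x) + 1).
  apply: eq_Rintegral => x _; rewrite /D DimbS /xi.
  by case: (K k.+1 x); rewrite ?mulr1 ?mulrN1; lra.
under [X in _ <= X + _]eq_Rintegral do rewrite expr2.
rewrite !RintegralD ?RintegralZl ?Rintegral_DimbMxi; auto 6.
by rewrite Rintegral_cst //= probability_setT /= mul1r; lra.
Qed.

Lemma Rintegral_Dimb_sqr_le n : Rintegral P setT (fun x => D n x ^+ 2) <= n%:R.
Proof.
elim: n => [|n IH].
  by under eq_Rintegral do rewrite /D Dimb0 expr0n; rewrite Rintegral_cst //= mul0r.
by rewrite (le_trans (Rintegral_Dimb_sqrS n)) // -natr1 lerD2r.
Qed.

Lemma Dimb_tail_le n c : 0 < c -> c ^+ 2 * fine (P [set x | c <= `|D n x|]) <= n%:R.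
Proof.
move=> c0; have mS := measurable_Dimb_preimage n [set y | c <= `|y|].
apply: le_trans (Rintegral_Dimb_sqr_le n).
have -> : fine (P [set x | c <= `|D n x|]) =
    Rintegral P setT (fun x => \1_[set x | c <= `|D n x|] x).
  by rewrite /Rintegral integral_indic // setIT.
rewrite -RintegralZl //; auto.
apply: le_Rintegral => //; try by auto.
move=> x _; rewrite indicE; case: (boolP (x \in _)) => [/set_mem /= cD|_].
  rewrite mulr1 -[D n x ^+ 2]real_normK ?num_real //.
  by apply: lerXn2r => //; rewrite nnegrE ltW.
by rewrite mulr0 sqr_ge0.
Qed.

Lemma wei_p_far_le n (eps eta : R) : (0 < n)%N -> 0 < eta ->
  (forall t, `|t| < eta -> `|f t - 1 / 2| < eps) ->
  (P [set x | (eps < `|p n.+1 x - 1 / 2|)%R] <= (eta ^-2 / n%:R)%:E)%E.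
Proof.
move=> n0 eta0 f_near; have n_gt0 : (0 : R) < n%:R by rewrite ltr0n.
pose S := [set x | eta * n%:R <= `|D n x|].
have mS : measurable S := measurable_Dimb_preimage n [set y | _ <= `|y|].
have far_sub : [set x | eps < `|p n.+1 x - 1 / 2|] `<=` S.
  move=> x /= far; rewrite /S /= leNgt; apply/negP => near.
  have := dist_wei_p_half_le K f delta_le_half x n0.
  have : `|f (D n x / n%:R) - 1 / 2| < eps.
    by apply: f_near; rewrite normrM normfV normr_nat ltr_pdivrMr.
  by move: far; rewrite /p; lra.
have mfar : measurable [set x | eps < `|p n.+1 x - 1 / 2|].
  exact: (measurable_wei_p_preimage n.+1 [set y | eps < `|y - 1 / 2|]).
suff tail : (P S <= (eta ^-2 / n%:R)%:E)%E.
  exact: le_trans (le_measure P (mem_set mfar) (mem_set mS) far_sub) tail.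
have finS : (P S \is a fin_num)%E.
  by rewrite ge0_fin_numE // (le_lt_trans (probability_le1 P mS)) ?ltry.
rewrite -(fineK finS) lee_fin.
have c2 : 0 < (eta * n%:R) ^+ 2 by rewrite exprn_gt0 // mulr_gt0.
rewrite -(ler_pM2l c2) (le_trans (Dimb_tail_le n (mulr_gt0 eta0 n_gt0))) //.
suff -> : (eta * n%:R) ^+ 2 * (eta ^-2 / n%:R) = n%:R by [].
by field; rewrite !gt_eqF.
Qed.

End wei_design.

Lemma continuous_at_dist_lt (R : realType) (f : R -> R) (x eps : R) :
  {for x, continuous f} -> 0 < eps ->
  exists2 eta, 0 < eta & forall t, `|t - x| < eta -> `|f t - f x| < eps.
Proof.
move=> /cvgrPdist_lt /(_ eps) fx eps_gt0; have /nbhs_ballP [eta eta_gt0 near] := fx eps_gt0.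
by exists eta => // t tx; rewrite distrC; apply: near; rewrite /ball /= distrC.
Qed.

Theorem lemma1 (R : realType) (d : measure_display) (T : measurableType d)
  (P : probability T R)
  (f : R -> R) (delta : R)
  (F : nat -> set (set T)) (K : nat -> T -> bool) :
  (forall r, -1 <= r <= 1 -> 0 <= f r <= 1) ->
  (forall r s, -1 <= r <= 1 -> -1 <= s <= 1 -> r <= s -> f s <= f r) ->
  f 0 = 1 / 2 ->
  {for 0, continuous f} ->
  0 < delta -> delta <= 1 / 2 ->
  (forall n, sigma_algebra setT (F n)) ->
  (forall n, F n `<=` measurable) ->
  (forall n, F n `<=` F n.+1) ->
  (forall i, (1 <= i)%N -> F i [set x | K i x]) ->
  (forall i, (1 <= i)%N -> forall A, F i.-1 A ->
     P (A `&` [set x | K i x]) = (\int[P]_(x in A) (wei_p f delta K i x)%:E)%E) ->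
  cvg_in_prob P (wei_p f delta K) (1 / 2).
Proof.
move=> _ f_nincr f0 f_cont delta_gt0 delta_le_half F_sigma F_meas F_incr K_adapted K_cond
  eps eps_gt0.
have [eta eta_gt0 f_near] := continuous_at_dist_lt f_cont eps_gt0.
rewrite f0 in f_near.
apply: (@squeeze_cvge _ _ _ _ (fun=> 0%E) _
  (fun n => (eta ^-2 * harmonic (n - 2)%N)%:E) _ 0%E); last 2 first.
- exact: cvg_cst.
- apply: cvg_EFin; first exact: nearW.
  rewrite -(mulr0 (eta ^-2)); apply: cvgMr.
  by have := @cvg_harmonic R; rewrite -(cvg_centern 2).
near=> n; have n_ge2 : (2 <= n)%N by near: n; exact: nbhs_infty_ge.
have -> : n = n.-2.+2 by rewrite -subn2 -addn2 subnK.
rewrite measure_ge0 /harmonic /= !subSS subn0.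
apply: (wei_p_far_le F_sigma F_meas F_incr K_adapted K_cond (ltW delta_gt0)) => //.
by move=> t; have := f_near t; rewrite subr0.
Unshelve. all: by end_near.
Qed.
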